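(* Let $G=(V,E)$ be a graph, and let $\varepsilon>0$ satisfy $2\varepsilon|E|<1$. Construct the following instance of \textsc{HET-EF1}: the goods are the vertices $V$; there is an agent $0$ with $v_0(u)=1$ for every $u\in V$, and for each edge $e=(u_j,u_k)\in E$ an agent $e$ with $v_e(u_j)=v_e(u_k)=\varepsilon$ and $v_e(u)=0$ for $u\notin\{u_j,u_k\}$. Then for every integer $t\ge0$, the maximum independent set of $G$ has size $t$ if and only if the optimal value $\mathrm{OPT}$ of the constructed instance satisfies $t\le\mathrm{OPT}<t+1$.
   Context: \textsc{HET-EF1}: given agents with additive (possibly different) valuations $v_i:2^{[m]}\to\mathbb{R}_{\ge0}$ over a set of $m$ goods, maximize $\sum_i v_i(S_i)$ over all allocations (ordered partitions of the goods, parts may be empty) $(S_i)_i$ that are $\mathrm{EF1}$: for all agents $i,j$ with $S_j\ne\emptyset$ there is $g\in S_j$ with $v_i(S_i)\ge v_i(S_j)-v_i(g)$. Valuations are additive: $v_i(S)=\sum_{g\in S}v_i(g)$. *)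

From HB Require Import structures.
From mathcomp Require Import all_boot all_order all_algebra.
Set Implicit Arguments. Unset Strict Implicit. Unset Printing Implicit Defensive.
Import Order.TTheory GRing.Theory Num.Theory.
Local Open Scope ring_scope.

(* A graph on the finite vertex type V is given by its edge set
   E : {set {set V}}, each edge being a 2-element set of vertices. *)

(* Agents of the constructed instance: None = agent 0, Some e = the agent of
   edge e (only meaningful for e \in E). *)
Definition agent (V : finType) := option {set V}.

Definition is_agent (V : finType) (E : {set {set V}}) (a : agent V) : bool :=
  if a is Some e then e \in E else true.

Definition val (R : realFieldType) (V : finType) (eps : R) (a : agent V) (g : V) : R :=
  match a with
  | None => 1
  | Some e => if g \in e then eps else 0
  end.

Definition valS (R : realFieldType) (V : finType) (eps : R) (a : agent V) (S : {set V}) : R :=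
  \sum_(g in S) val eps a g.

Definition bundle (V : finType) (f : {ffun V -> agent V}) (a : agent V) : {set V} :=
  [set g | f g == a].

Definition valid_alloc (V : finType) (E : {set {set V}}) (f : {ffun V -> agent V}) : bool :=
  [forall g, is_agent E (f g)].

Definition EF1b (R : realFieldType) (V : finType) (E : {set {set V}}) (eps : R)
    (f : {ffun V -> agent V}) : bool :=
  [forall i : agent V, forall j : agent V,
     (is_agent E i && is_agent E j && (bundle f j != set0)) ==>
     [exists g in bundle f j,
        valS eps i (bundle f i) >= valS eps i (bundle f j) - val eps i g]].

Definition welfare (R : realFieldType) (V : finType) (E : {set {set V}}) (eps : R)
    (f : {ffun V -> agent V}) : R :=
  valS eps None (bundle f None) + \sum_(e in E) valS eps (Some e) (bundle f (Some e)).

(* OPT: maximum welfare over EF1 allocations (the maximum is taken with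
   identity 0; all welfares are nonnegative and EF1 allocations exist). *)
Definition OPT (R : realFieldType) (V : finType) (E : {set {set V}}) (eps : R) : R :=
  \big[Num.max/0]_(f : {ffun V -> agent V} | valid_alloc E f && EF1b E eps f)
     welfare E eps f.

Definition independent (V : finType) (E : {set {set V}}) (S : {set V}) : bool :=
  [forall e in E, ~~ (e \subset S)].

Definition mis_size (V : finType) (E : {set {set V}}) : nat :=
  \max_(S : {set V} | independent E S) #|S|.

From Pilot Require Import Defs.
From HB Require Import structures.
From mathcomp Require Import all_boot all_order all_algebra.
Set Implicit Arguments. Unset Strict Implicit. Unset Printing Implicit Defensive.
Import Order.TTheory GRing.Theory Num.Theory.
Local Open Scope ring_scope.

(* Let alpha be the size of a maximum independent set of G.  We show
   alpha <= OPT < alpha + 1; the equivalence then follows because the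
   half-open unit intervals [t, t + 1) are pairwise disjoint.

   Upper bound: in an EF1 allocation the bundle S_0 of agent 0 is
   independent, since if it contained an edge e, agent e would value S_0 at
   2 eps and still at least eps after removing any single good, while
   valuing its own bundle at 0.  Edge agents contribute at most
   2 eps |E| < 1 in total, so the welfare is below |S_0| + 1 <= alpha + 1.

   Lower bound: for a maximum independent set I, give I to agent 0 and each
   vertex u outside I to the agent of an edge joining u to I (such an edge
   exists by maximality).  An edge meeting I has exactly one endpoint
   outside I, so every edge agent receives at most one good; this makes the
   allocation EF1 and its welfare is at least |I| = alpha. *)

Section Graph.
Variables (V : finType) (E : {set {set V}}).
Hypothesis hE : forall e, e \in E -> #|e| = 2%N.

Lemma independent_meet_edge S e :
  independent E S -> e \in E -> (#|S :&: e| <= 1)%N.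
Proof.
move=> /forall_inP hS eE.
have hp : S :&: e \proper e.
  by rewrite properE subsetIr /=; apply: contra (hS e eE) => /subsetIP [].
by have := proper_card hp; rewrite (hE eE) ltnS.
Qed.

Lemma independent0 : independent E set0.
Proof.
apply/forall_inP => e eE; apply/negP => /subset_leq_card.
by rewrite hE // cards0.
Qed.

Lemma mis_size_attained : exists2 I, independent E I & #|I| = mis_size E.
Proof.
have [I hI hIeq] := @eq_bigmax_cond _ (independent E) (fun S : {set V} => #|S|)
  ltac:(by apply/card_gt0P; exists set0; apply: independent0).
by exists I; rewrite // /mis_size hIeq.
Qed.

Lemma mis_size_max S : independent E S -> (#|S| <= mis_size E)%N.
Proof. exact: (leq_bigmax_cond (F := fun S : {set V} => #|S|)). Qed.

Section MaximumIndependentSet.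
Variable I : {set V}.
Hypothesis hI : independent E I.
Hypothesis hImax : #|I| = mis_size E.

(* Maximality: every vertex outside I is joined by an edge to I.  Indeed
   u |: I is not independent, so it contains an edge e; as e is not inside I
   it contains u, and its other endpoint lies in I. *)
Lemma maximum_independent_dominating u :
  u \notin I -> exists2 e, e \in E & (u \in e) && (e :&: I != set0).
Proof.
move=> uI.
have : ~~ independent E (u |: I).
  by apply/negP => /mis_size_max; rewrite cardsU1 uI -hImax ltnn.
case/forall_inPn => e eE /negPn sub.
have /subsetPn [x xe xI] : ~~ (e \subset I) by move/forall_inP: hI; apply.
have /setU1P [xu|] := subsetP sub x xe; last by rewrite (negbTE xI).
subst x; exists e => //; rewrite xe /=.
have : (0 < #|e :\ u|)%N by move: (hE eE); rewrite (cardsD1 u e) xe add1n => -[->].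
case/card_gt0P => w /setD1P [wu we].
apply/set0Pn; exists w; rewrite inE we /=.
by have /setU1P [/eqP|] := subsetP sub w we; first by rewrite (negbTE wu).
Qed.

Lemma edge_outside_le1 e :
  e \in E -> e :&: I != set0 -> (#|e :\: I| <= 1)%N.
Proof.
move=> eE /set0Pn [w wI]; have := cardsID I e; rewrite (hE eE) => split_e.
have meet : (0 < #|e :&: I|)%N by apply/card_gt0P; exists w.
by rewrite -(leq_add2l #|e :&: I|) split_e addn1 ltnS.
Qed.

Definition mis_alloc : {ffun V -> agent V} :=
  [ffun u => if u \in I then None
             else [pick e in E | (u \in e) && (e :&: I != set0)]].

Lemma mis_alloc_outside u : u \notin I ->
  exists2 e, mis_alloc u = Some e & [/\ e \in E, u \in e & e :&: I != set0].
Proof.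
move=> uI; rewrite /mis_alloc ffunE (negbTE uI).
case: pickP => [e /andP [eE /andP [ue eI]]|none]; first by exists e.
have [e eE He] := maximum_independent_dominating uI.
by move: (none e); rewrite /= eE He.
Qed.

Lemma mis_alloc_valid : valid_alloc E mis_alloc.
Proof.
apply/forallP => u; case uI: (u \in I); first by rewrite /mis_alloc ffunE uI.
by have [e -> []] := mis_alloc_outside (negbT uI).
Qed.

Lemma bundle_mis_alloc_None : bundle mis_alloc None = I.
Proof.
apply/setP => u; rewrite inE; case uI: (u \in I); first by rewrite ffunE uI.
by have [e ->] := mis_alloc_outside (negbT uI).
Qed.

Lemma bundle_mis_alloc_Some e y : y \in bundle mis_alloc (Some e) ->
  [/\ y \in e :\: I, e \in E & e :&: I != set0].
Proof.
rewrite inE; case yI: (y \in I); first by rewrite ffunE yI.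
have [e' -> [e'E ye' e'I]] := mis_alloc_outside (negbT yI).
by move/eqP=> [<-]; rewrite inE yI.
Qed.

Lemma bundle_mis_alloc_Some_le1 e : (#|bundle mis_alloc (Some e)| <= 1)%N.
Proof.
have [/eqP -> | /set0Pn [x /bundle_mis_alloc_Some [_ eE eI]]] :=
  boolP (bundle mis_alloc (Some e) == set0); first by rewrite cards0.
apply: leq_trans (edge_outside_le1 eE eI); apply/subset_leq_card/subsetP => y.
by case/bundle_mis_alloc_Some.
Qed.

End MaximumIndependentSet.
End Graph.

Section Valuations.
Variables (R : realFieldType) (V : finType) (eps : R).
Hypothesis heps : 0 < eps.

Lemma val_ge0 (a : agent V) (g : V) : 0 <= Defs.val eps a g.
Proof. by case: a => [e|] /=; [case: ifP => _; [exact: ltW|] | exact: ler01]. Qed.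

Lemma valS_ge0 (a : agent V) (S : {set V}) : 0 <= valS eps a S.
Proof. by apply: sumr_ge0 => g _; apply: val_ge0. Qed.

Lemma valS_None (S : {set V}) : valS eps None S = #|S|%:R.
Proof. by rewrite /valS sumr_const. Qed.

Lemma valS_Some (e S : {set V}) : valS eps (Some e) S = #|S :&: e|%:R * eps.
Proof.
rewrite /valS /= -big_mkcondr /= (eq_bigl (fun g => g \in S :&: e)).
  by rewrite sumr_const mulr_natl.
by move=> g; rewrite inE.
Qed.

Lemma val_Some_le (e : {set V}) (g : V) : Defs.val eps (Some e) g <= eps.
Proof. by rewrite /=; case: ifP => _; [|exact: ltW]. Qed.

Lemma EF1_witness_le1 (a : agent V) (S : {set V}) g :
  (#|S| <= 1)%N -> g \in S -> valS eps a S - Defs.val eps a g = 0.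
Proof.
move=> /card_le1_eqP S1 gS.
have -> : S = [set g].
  by apply/setP => x; rewrite inE; apply/idP/eqP => [xS|->]; [exact: S1|].
by rewrite /valS big_set1 subrr.
Qed.

Lemma EF1_witness_edge (e S : {set V}) :
  (#|S :&: e| <= 1)%N -> S != set0 ->
  exists2 g, g \in S & valS eps (Some e) S - Defs.val eps (Some e) g <= 0.
Proof.
move=> Se1 /set0Pn [x xS].
have [/eqP Se0|/set0Pn [g /setIP [gS ge]]] := boolP (S :&: e == set0).
  by exists x => //; rewrite valS_Some Se0 cards0 mul0r sub0r oppr_le0 val_ge0.
exists g => //; rewrite valS_Some /= ge subr_le0.
by rewrite -[X in _ <= X]mul1r ler_pM2r // lern1.
Qed.

End Valuations.

Section Bounds.
Variables (R : realFieldType) (V : finType) (E : {set {set V}}) (eps : R).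
Hypothesis hE : forall e, e \in E -> #|e| = 2%N.
Hypothesis heps : 0 < eps.

Lemma EF1_bundle_None_independent (f : {ffun V -> agent V}) :
  EF1b E eps f -> independent E (bundle f None).
Proof.
move=> hf; apply/forall_inP => e eE; apply/negP => sub.
have ne : bundle f None != set0.
  have /card_gt0P [x xe] : (0 < #|e|)%N by rewrite hE.
  by apply/set0Pn; exists x; apply: (subsetP sub).
move/forallP: hf => /(_ (Some e)) /forallP /(_ None).
rewrite /= eE ne /= => /exists_inP [g _]; rewrite !valS_Some.
have -> : bundle f (Some e) :&: e = set0.
  apply/setP => x; rewrite !inE; apply/negP => /andP [/eqP fx xe].
  by move: (subsetP sub x xe); rewrite inE fx.
rewrite (setIidPr sub) cards0 hE // mul0r subr_le0 => h.
have := le_trans h (val_Some_le heps e g).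
by rewrite mulr_natl mulr2n gerDl leNgt heps.
Qed.

Lemma welfare_lt (f : {ffun V -> agent V}) :
  2 * eps * (#|E|)%:R < 1 -> welfare E eps f < #|bundle f None|%:R + 1.
Proof.
move=> hsmall; rewrite /welfare valS_None ltrD2l; apply: le_lt_trans hsmall.
rewrite mulr_natr -sumr_const; apply: ler_sum => e eE.
rewrite valS_Some ler_pM2r // -[2]/(2%N%:R) -(hE eE) ler_nat.
exact/subset_leq_card/subsetIr.
Qed.

Lemma mis_alloc_EF1 (I : {set V}) :
  independent E I -> #|I| = mis_size E -> EF1b E eps (mis_alloc E I).
Proof.
move=> hI hImax.
(* Towards an edge agent's bundle (at most one good) nobody envies after a
   removal; towards agent 0's bundle I, an edge agent holding an endpoint
   removes it, and agent 0 itself loses 1 by removing any good. *)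
apply/forallP => i; apply/forallP => j; apply/implyP => /andP [/andP [ai _] ne].
have [g gS hg] : exists2 g, g \in bundle (mis_alloc E I) j &
    valS eps i (bundle (mis_alloc E I) j) - Defs.val eps i g
      <= valS eps i (bundle (mis_alloc E I) i).
  case: j ne => [e|] ne.
    case/set0Pn: ne => g gS; exists g => //.
    by rewrite (EF1_witness_le1 _ _ (bundle_mis_alloc_Some_le1 hE hI hImax e) gS)
      (valS_ge0 heps).
  rewrite bundle_mis_alloc_None // in ne *; case: i ai => [e|] ai.
    have [g gI hg] := EF1_witness_edge heps (independent_meet_edge hE hI ai) ne.
    by exists g => //; apply: le_trans hg (valS_ge0 heps _ _).
  case/set0Pn: ne => g gI; exists g => //.
  by rewrite bundle_mis_alloc_None // gerBl ler01.
by apply/exists_inP; exists g.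
Qed.

Lemma OPT_bounds : 2 * eps * (#|E|)%:R < 1 ->
  (mis_size E)%:R <= OPT E eps /\ OPT E eps < (mis_size E)%:R + 1.
Proof.
move=> hsmall; split.
  have [I hI hImax] := mis_size_attained hE.
  apply: (bigmax_sup (mis_alloc E I)).
    by rewrite mis_alloc_valid // mis_alloc_EF1.
  rewrite /welfare bundle_mis_alloc_None // valS_None hImax lerDl.
  by apply: sumr_ge0 => e _; apply: valS_ge0.
apply: bigmax_lt => [|f /andP [_ hf]]; first by rewrite ltr_wpDl ?ler0n ?ltr01.
apply: lt_le_trans (welfare_lt f hsmall) _.
by rewrite lerD2r ler_nat mis_size_max // EF1_bundle_None_independent.
Qed.

End Bounds.

Lemma nat_unit_interval_unique (R : realDomainType) (x : R) (a t : nat) :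
  a%:R <= x < a%:R + 1 -> (a = t <-> t%:R <= x < t%:R + 1).
Proof.
case/andP => ax xa; split; first by move=> <-; rewrite ax xa.
have below m n : m%:R <= x -> x < n%:R + 1 -> (m <= n)%N.
  by move=> mx xn; rewrite -ltnS -(ltr_nat R) -natr1 (le_lt_trans mx xn).
by case/andP => tx xt; apply/eqP; rewrite eqn_leq (below _ _ ax xt) (below _ _ tx xa).
Qed.

Theorem lemmaA3 (R : realFieldType) (V : finType) (E : {set {set V}}) (eps : R)
  (hE : forall e, e \in E -> #|e| = 2%N)
  (heps : 0 < eps) (hsmall : 2 * eps * (#|E|)%:R < 1) (t : nat) :
  mis_size E = t <-> ((t%:R <= OPT E eps) && (OPT E eps < t%:R + 1)).
Proof.
have [lb ub] := OPT_bounds hE heps hsmall.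
by apply: nat_unit_interval_unique; rewrite lb ub.
Qed.
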